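(* For every $K>0$ there is a constant $C_1>0$ such that for every finite set $A\subset\mathbb{R}$ with $|A(A+A+A+A)|\le K|A|^2$, we have $|A+A|\le C_1|A|^{3/2}$.
   Context: $A+A=\{a+b:a,b\in A\}$ and $A(A+A+A+A)=\{a(b+c+d+e):a,b,c,d,e\in A\}$. *)

From HB Require Import structures.
From mathcomp Require Import all_boot all_order all_algebra.
From mathcomp Require Import finmap.
From mathcomp Require Import all_classical all_reals all_analysis.
Set Implicit Arguments. Unset Strict Implicit. Unset Printing Implicit Defensive.
Import Order.TTheory GRing.Theory Num.Theory.
Local Open Scope ring_scope.
Local Open Scope fset_scope.

Definition sumset {R : realType} (A : {fset R}) : {fset R} :=
  [fset (a + b)%R | a : R in A, b : R in A].

Definition prod_sum4 {R : realType} (A : {fset R}) : {fset R} :=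
  [fset (a * s)%R | a : R in A, s : R in sumset (sumset A)].

(* Splitting A and A + A by sign reduces everything to finite sets A, B of
   positive reals with a(b + c) in P for all a in A and b, c in B.  Order the
   pairs (s, t) of B x B by their slope t / s.  If (s, t) is not of maximal
   slope, send (a, (s, t)) to a((s, t) + (s', t')) in P x P, where (s', t') is
   a fixed pair of the next larger slope.  The image lies strictly between two
   consecutive slopes, which recovers the slope of (s, t), and then a and
   (s, t) by linear independence; hence |A| (|B|^2 - |B|) <= |P|^2.  Taking
   for B the positive parts of A + A and of -(A + A), and using
   |P| <= K |A|^2 and |A + A| <= |A|^2, gives |A + A|^2 = O(|A|^3). *)

From HB Require Import structures.
From mathcomp Require Import all_boot all_order all_algebra.
From mathcomp Require Import finmap.
From mathcomp Require Import all_classical all_reals all_analysis.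
From mathcomp Require Import ring lra.
Set Implicit Arguments.
Unset Strict Implicit.
Unset Printing Implicit Defensive.
Import Order.TTheory GRing.Theory Num.Theory.
Local Open Scope fset_scope.
Local Open Scope ring_scope.

Section Slopes.
Variable R : realFieldType.
Implicit Types (S : seq (R * R)) (p q : R * R) (r : R).

Definition slope p := p.2 / p.1.

Definition dilate (a : R) p : R * R := (a * p.1, a * p.2).

(* The default [0] is only returned when no slope in [S] exceeds [r]. *)
Definition next_pair S r : R * R :=
  head 0 (sort (relpre slope <=%R) [seq q <- S | r < slope q]).

Lemma next_pairP S r : has (fun q => r < slope q) S ->
  [/\ next_pair S r \in S, r < slope (next_pair S r) &
      {in S, forall q, r < slope q -> slope (next_pair S r) <= slope q}].
Proof.
rewrite has_filter /next_pair; set T := [seq q <- S | _] => T0.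
have le_slope_total : total (relpre slope <=%R) by move=> p q; exact: le_total.
have le_slope_trans : transitive (relpre slope <=%R) by move=> ? ? ?; exact: le_trans.
have mem_sortT q : (q \in sort (relpre slope <=%R) T) = (r < slope q) && (q \in S).
  by rewrite mem_sort mem_filter.
have := sort_sorted le_slope_total T; have := mem_sortT.
case: (sort _ T) (size_sort (relpre slope <=%R) T) => [|p s] /=.
  by move/eqP; rewrite eq_sym size_eq0 (negPf T0).
move=> _ memT /(order_path_min le_slope_trans)/allP p_min.
have /andP[rp pS] : (r < slope p) && (p \in S) by rewrite -memT mem_head.
split=> // q qS rq; have : q \in p :: s by rewrite memT rq.
by rewrite inE => /orP[/eqP-> // | /p_min].
Qed.

Lemma slope_dilate a p : a != 0 -> slope (dilate a p) = slope p.
Proof. by move=> a0; rewrite /slope /= -mulf_div divff ?mul1r. Qed.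

Lemma slope_mediant p q : 0 < p.1 -> 0 < q.1 -> slope p < slope q ->
  slope p < slope (p + q) < slope q.
Proof.
move=> p1 q1; have pq1 : 0 < p.1 + q.1 by rewrite addr_gt0.
have [ep eq] : p.2 = slope p * p.1 /\ q.2 = slope q * q.1.
  by rewrite /slope !divfK ?gt_eqF.
rewrite [slope (_ + _)]/slope /= ep eq; move: (slope p) (slope q) => r r' lt.
by rewrite ltr_pdivlMr // ltr_pdivrMr //; apply/andP; split; nra.
Qed.

Lemma eq_pair_slope p p' : p.1 != 0 -> p.1 = p'.1 -> slope p = slope p' -> p = p'.
Proof.
move=> p1 e1 e; have e2 : p.2 = p'.2.
  by rewrite -(divfK p1 p.2) -[p.2 / p.1]/(slope p) e /slope -e1 divfK.
by case: p p' e1 e2 {p1 e} => [? ?] [? ?] /= -> ->.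
Qed.

Section Steps.
Variable S : seq (R * R).
Hypothesis S_pos : {in S, forall p, 0 < p.1}.

Definition steeper_in p := has (fun q => slope p < slope q) S.

Definition step p := p + next_pair S (slope p).

Lemma slope_step p : p \in S -> steeper_in p ->
  slope p < slope (step p) < slope (next_pair S (slope p)).
Proof.
move=> pS /next_pairP[nS lt _].
by apply: slope_mediant => //; apply: S_pos.
Qed.

Lemma slope_step_inj p p' : p \in S -> p' \in S -> steeper_in p -> steeper_in p' ->
  slope (step p) = slope (step p') -> slope p = slope p'.
Proof.
wlog lt : p p' / slope p < slope p'.
  move=> wlog pS p'S sp sp' e.
  case: (ltgtP (slope p) (slope p')) => [lt|lt|->] //.
  - exact: wlog.
  - by apply/esym/wlog.
move=> pS p'S sp sp' e; have /andP[_ lt_next] := slope_step pS sp.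
have /andP[lt' _] := slope_step p'S sp'.
have [_ _ next_min] := next_pairP sp.
have := lt_trans (lt_le_trans lt_next (next_min _ p'S lt)) lt'.
by rewrite e ltxx.
Qed.

Lemma dilate_step_inj a a' p p' : 0 < a -> 0 < a' -> p \in S -> p' \in S ->
  steeper_in p -> steeper_in p' ->
  dilate a (step p) = dilate a' (step p') -> a = a' /\ p = p'.
Proof.
move=> a0 a'0 pS p'S sp sp' e.
have e_slope : slope p = slope p'.
  apply: slope_step_inj => //.
  rewrite -(slope_dilate (step p) (lt0r_neq0 a0)).
  by rewrite -(slope_dilate (step p') (lt0r_neq0 a'0)) e.
have [_ lt _] := next_pairP sp.
move: e lt; rewrite /step /dilate -e_slope; set q := next_pair S (slope p).
have q0 : 0 < q.1 by apply: S_pos; case: (next_pairP sp).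
have p0 := S_pos pS; have p'0 := S_pos p'S.
have ep : p.2 = slope p * p.1 by rewrite /slope divfK ?lt0r_neq0.
have ep' : p'.2 = slope p * p'.1 by rewrite e_slope /slope divfK ?lt0r_neq0.
have eq : q.2 = slope q * q.1 by rewrite /slope divfK ?lt0r_neq0.
case=> e1 e2 lt; move: e2; rewrite /= ep ep' eq => e2.
(* [p] and [p'] lie on the line of slope [slope p], [q] on a steeper one. *)
have aa' : a = a'.
  have : (slope q - slope p) * q.1 * (a - a') = 0.
    transitivity (a * (slope p * p.1 + slope q * q.1)
      - a' * (slope p * p'.1 + slope q * q.1)
      - slope p * (a * (p.1 + q.1) - a' * (p'.1 + q.1))); first by ring.
    by rewrite e1 e2 !subrr mulr0 subrr.
  by move/eqP; rewrite !mulf_eq0 !subr_eq0 (gt_eqF q0) (gt_eqF lt) orbF => /eqP.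
split=> //; apply: eq_pair_slope => //; first exact: lt0r_neq0.
by move: e1; rewrite -aa' => /(mulfI (lt0r_neq0 a0))/addIr.
Qed.

Lemma steepest_inj p p' : p \in S -> p' \in S -> ~~ steeper_in p -> ~~ steeper_in p' ->
  p.1 = p'.1 -> p = p'.
Proof.
move=> pS p'S /hasPn sp /hasPn sp' e1; apply: eq_pair_slope => //.
  by rewrite gt_eqF ?S_pos.
by apply/eqP; rewrite eq_le !leNgt sp ?sp'.
Qed.

End Steps.

Definition mul_sums_in (A B P : {fset R}) : Prop :=
  forall a b c, a \in A -> b \in B -> c \in B -> a * (b + c) \in P.

Section CardMulSums.
Variables A B P : {fset R}.
Hypothesis A_pos : {in A, forall a, 0 < a}.
Hypothesis B_pos : {in B, forall b, 0 < b}.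
Hypothesis ABP : mul_sums_in A B P.

Let pairs := [seq (x, y) | x <- enum_fset B, y <- enum_fset B].

Let mem_pairs p : p \in pairs -> p.1 \in B /\ p.2 \in B.
Proof. by case/allpairsP => -[x y] [/= xB yB ->]. Qed.

Let pairs_pos : {in pairs, forall p, 0 < p.1}.
Proof. by move=> p /mem_pairs[/B_pos]. Qed.

Let uniq_pairs : uniq pairs.
Proof. by apply: allpairs_uniq => // -[? ?] [? ?]. Qed.

Lemma card_steeper_pairs :
  (#|` A| * size [seq p <- pairs | steeper_in pairs p] <= #|` P| ^ 2)%N.
Proof.
set G := [seq p <- pairs | _].
pose D := [seq (a, p) | a <- enum_fset A, p <- G].
pose phi (x : R * (R * R)) := dilate x.1 (step pairs x.2).
have memG p : p \in G -> p \in pairs /\ steeper_in pairs p.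
  by rewrite mem_filter => /andP[].
have memD x : x \in D -> x.1 \in A /\ x.2 \in G.
  by case/allpairsP => -[a p] [/= aA pG ->].
have phi_inj : {in D &, injective phi}.
  move=> [a p] [a' p'] /memD[/A_pos a0 /memG[pS sp]] /memD[/A_pos a'0 /memG[p'S sp']].
  by move=> /(dilate_step_inj pairs_pos a0 a'0 pS p'S sp sp')[/= -> ->].
have phiDP : {subset map phi D <= [seq (x, y) | x <- enum_fset P, y <- enum_fset P]}.
  move=> _ /mapP[[a p] /memD[/= aA /memG[pS sp]] ->].
  have [/mem_pairs[q1B q2B] _ _] := next_pairP sp; have [p1B p2B] := mem_pairs pS.
  by apply: allpairs_f; apply: ABP.
rewrite -mulnn -(size_allpairs pair) -(size_allpairs pair) -(size_map phi).
apply: uniq_leq_size phiDP.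
rewrite map_inj_in_uniq //; apply: allpairs_uniq => //; first exact: filter_uniq.
by move=> [? ?] [? ?].
Qed.

Lemma card_steepest_pairs :
  (size [seq p <- pairs | ~~ steeper_in pairs p] <= #|` B|)%N.
Proof.
rewrite -(size_map fst); apply: uniq_leq_size.
  rewrite map_inj_in_uniq ?filter_uniq // => p p'.
  rewrite !mem_filter => /andP[sp pS] /andP[sp' p'S].
  exact: (steepest_inj pairs_pos pS p'S sp sp').
by move=> x /mapP[p]; rewrite mem_filter => /andP[_ /mem_pairs[p1B _]] ->.
Qed.

Lemma card_mul_sums_pos : (#|` A| * #|` B| ^ 2 <= #|` P| ^ 2 + #|` A| * #|` B|)%N.
Proof.
have <- : (size [seq p <- pairs | steeper_in pairs p] +
    size [seq p <- pairs | ~~ steeper_in pairs p] = #|` B| ^ 2)%N.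
  by rewrite !size_filter (count_predC (steeper_in pairs)) size_allpairs mulnn.
by rewrite mulnDr leq_add ?card_steeper_pairs ?leq_mul ?card_steepest_pairs.
Qed.

End CardMulSums.

Implicit Types A B P X : {fset R}.

Definition posfs X := [fset x in X | 0 < x].

Definition oppfs X := [fset - x | x in X].

Lemma posfs_sub X : {subset posfs X <= X}.
Proof. by move=> x; rewrite inE => /andP[]. Qed.

Lemma posfs_gt0 X : {in posfs X, forall x, 0 < x}.
Proof. by move=> x; rewrite inE => /andP[]. Qed.

Lemma in_oppfs X x : (x \in oppfs X) = (- x \in X).
Proof.
apply/imfsetP/idP => [[y yX ->] | xX]; first by rewrite opprK.
by exists (- x); rewrite ?opprK.
Qed.

Lemma card_oppfs X : #|` oppfs X| = #|` X|.
Proof. by rewrite card_imfset //=; exact: oppr_inj. Qed.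

Lemma card_posfs_oppfs X : (#|` X| <= #|` posfs X| + #|` posfs (oppfs X)| + 1)%N.
Proof.
rewrite -(card_oppfs (posfs (oppfs X))) -(cardfs1 (0 : R)).
have sub : X `<=` posfs X `|` oppfs (posfs (oppfs X)) `|` [fset 0].
  apply/fsubsetP => x xX; rewrite !inE in_oppfs !inE in_oppfs opprK oppr_gt0 xX /=.
  by case: ltgtP.
apply: leq_trans (fsubset_leq_card sub) _.
apply: leq_trans (leq_card_fsetU _ _).1 _; rewrite leq_add2r.
exact: (leq_card_fsetU _ _).1.
Qed.

Lemma mul_sums_inS A B P A' B' : {subset A' <= A} -> {subset B' <= B} ->
  mul_sums_in A B P -> mul_sums_in A' B' P.
Proof. by move=> sA sB ABP a b c /sA aA /sB bB /sB cB; apply: ABP. Qed.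

Lemma mul_sums_inNl A B P : mul_sums_in A B P -> mul_sums_in (oppfs A) B (oppfs P).
Proof. by move=> ABP a b c; rewrite !in_oppfs -mulNr; apply: ABP. Qed.

Lemma mul_sums_inNr A B P : mul_sums_in A B P -> mul_sums_in A (oppfs B) (oppfs P).
Proof. by move=> ABP a b c; rewrite !in_oppfs -mulrN opprD; apply: ABP. Qed.

Lemma card_mul_sums_posfs A B P : mul_sums_in A B P ->
  (#|` posfs A| * #|` posfs B| ^ 2 <= #|` P| ^ 2 + #|` posfs A| * #|` posfs B|)%N.
Proof.
move=> ABP; apply: card_mul_sums_pos; try exact: posfs_gt0.
by apply: mul_sums_inS ABP; exact: posfs_sub.
Qed.

Lemma card_mul_sums A B P : mul_sums_in A B P ->
  ((#|` posfs A| + #|` posfs (oppfs A)|) * #|` posfs B| ^ 2 <=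
    2 * #|` P| ^ 2 + (#|` posfs A| + #|` posfs (oppfs A)|) * #|` posfs B|)%N.
Proof.
move=> ABP; have := card_mul_sums_posfs (mul_sums_inNl ABP).
rewrite card_oppfs !mulnDl mul2n -addnn addnACA; apply: leq_add.
exact: card_mul_sums_posfs.
Qed.

Lemma sqr_le_cube_of_mul_sums (K n x y N : R) : 2 <= n -> n - 1 <= x ->
  0 <= N -> N <= K * n ^+ 2 -> y <= n ^+ 2 -> x * y ^+ 2 <= 2 * N ^+ 2 + x * y ->
  y ^+ 2 <= (4 * K ^+ 2 + 1) * n ^+ 3.
Proof.
move=> n2 nx N0 NK yn xy.
have x0 : 0 < x by lra.
have N_sqr : N * N <= (K * n ^+ 2) * (K * n ^+ 2) by apply: ler_pM.
have Kn0 : 0 <= K ^+ 2 * n ^+ 3 by rewrite mulr_ge0 ?sqr_ge0 ?exprn_ge0 //; lra.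
have : x * (y ^+ 2 - y) <= x * (4 * K ^+ 2 * n ^+ 3) by nra.
rewrite ler_pM2l // => yy.
have : n ^+ 2 <= n ^+ 3 by rewrite ler_eXn2l //; lra.
nra.
Qed.

Lemma card_posfs_sqr_le (K : R) A B P : mul_sums_in A B P -> (2 <= #|` A|)%N ->
  #|` P|%:R <= K * #|` A|%:R ^+ 2 -> (#|` B| <= #|` A| ^ 2)%N ->
  #|` posfs B|%:R ^+ 2 <= (4 * K ^+ 2 + 1) * #|` A|%:R ^+ 3.
Proof.
move=> ABP n2 NK BA.
have := card_mul_sums ABP; have := card_posfs_oppfs A.
have yB : (#|` posfs B| <= #|` A| ^ 2)%N.
  by apply: leq_trans BA; apply/fsubset_leq_card/fsubsetP/posfs_sub.
move: n2 yB; rewrite -!(ler_nat R) !(natrD, natrM, natrX) => n2 yB cover xy.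
by apply: sqr_le_cube_of_mul_sums xy => //; lra.
Qed.

Lemma card_sqr_le_of_mul_sums (K : R) A B P : 0 <= K -> mul_sums_in A B P ->
  #|` P|%:R <= K * #|` A|%:R ^+ 2 -> (#|` B| <= #|` A| ^ 2)%N ->
  #|` B|%:R ^+ 2 <= (3 * (2 * K + 1)) ^+ 2 * #|` A|%:R ^+ 3.
Proof.
move=> K0 ABP NK BA; have n0 := ler0n R #|` A|; have m0 := ler0n R #|` B|.
have C1 : 1 <= (3 * (2 * K + 1)) ^+ 2 by nra.
have [n_le1 | n_ge2] := leqP #|` A| 1.
  move: n_le1 BA; rewrite -(ler_nat R _ 1) -(ler_nat R) natrX => n1 BA.
  have := ler_pM m0 m0 BA BA; have := exprn_ge0 3 n0; nra.
have y1 := card_posfs_sqr_le ABP n_ge2 NK BA.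
have y2 : #|` posfs (oppfs B)|%:R ^+ 2 <= (4 * K ^+ 2 + 1) * #|` A|%:R ^+ 3.
  by apply: card_posfs_sqr_le (mul_sums_inNr ABP) n_ge2 _ _; rewrite card_oppfs.
have := card_posfs_oppfs B; rewrite -(ler_nat R) !natrD.
set y := #|` posfs B|%:R; set y' := #|` posfs (oppfs B)|%:R => cover.
have n3 : 1 <= #|` A|%:R ^+ 3 :> R by rewrite exprn_ege1 // (ler_nat R 1) ltnW.
have := ler0n R #|` posfs B|; have := ler0n R #|` posfs (oppfs B)|.
have := sqr_ge0 (y - y'); have := sqr_ge0 (y - 1); have := sqr_ge0 (y' - 1).
have := ler_pM m0 m0 cover cover; nra.
Qed.

End Slopes.

Lemma powR32_sqr (R : realType) (x : R) : 0 <= x -> powR x (3 / 2) ^+ 2 = x ^+ 3.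
Proof.
move=> x0; rewrite -powR_mulrn ?powR_ge0 // -powRrM.
by rewrite (_ : 3 / 2 * 2%:R = 3%:R) ?powR_mulrn // divfK // pnatr_eq0.
Qed.

Lemma card_sumset_le (R : realType) (A : {fset R}) : (#|` sumset A| <= #|` A| ^ 2)%N.
Proof.
rewrite /sumset unlock size_seq_fset -mulnn.
by apply: leq_trans (size_undup _) _; rewrite size_allpairs.
Qed.

Lemma mul_sums_in_prod_sum4 (R : realType) (A : {fset R}) :
  mul_sums_in A (sumset A) (prod_sum4 A).
Proof.
move=> a b c aA bS cS; apply/imfset2P; exists a => //; exists (b + c) => //.
by apply/imfset2P; exists b => //; exists c.
Qed.

Lemma le_mul_powR32 (R : realType) (C x y : R) : 0 <= C -> 0 <= x -> 0 <= y ->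
  y ^+ 2 <= C ^+ 2 * x ^+ 3 -> y <= C * powR x (3 / 2).
Proof.
move=> C0 x0 y0; rewrite -powR32_sqr // -exprMn.
by rewrite ler_pXn2r // nnegrE // mulr_ge0 ?powR_ge0.
Qed.

Unset Implicit Arguments.
Local Open Scope fset_scope.

Theorem theorem3p4 (R : realType) (K : R) : 0 < K ->
  exists C1 : R, 0 < C1 /\
    forall A : {fset R},
      (#|` prod_sum4 A|%:R <= K * (#|` A|%:R) ^+ 2) ->
      #|` sumset A|%:R <= C1 * powR (#|` A|%:R) (3 / 2).
Proof.
move=> K0; exists (3 * (2 * K + 1)); split=> [|A hA]; first lra.
apply: le_mul_powR32; rewrite ?ler0n //; first lra.
apply: card_sqr_le_of_mul_sums hA (card_sumset_le A); first exact: ltW.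
exact: mul_sums_in_prod_sum4.
Qed.
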